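(* Consider a tree power network $(\mathcal{V},\mathcal{E})$, $\mathcal{V}=\{1,\dots,n\}$, with angle limits $\underline{\theta}_{ik}\le\overline{\theta}_{ik}$ satisfying $|\underline{\theta}_{ik}|,|\overline{\theta}_{ik}|<90^\circ$, $\underline{\theta}_{ik}\le 0\le\overline{\theta}_{ik}$, and bus power upper bounds $P_i\le\overline{P}_i$ (no lower bounds). Then for every $\tilde{\mathbf{v}}\in\mathbb{R}^n_{>0}$: (a) $\mathcal{O}(\mathcal{P}_\theta(\tilde{\mathbf{v}}))=\mathcal{O}(\overline{\mathrm{conv}}(\mathcal{P}_\theta(\tilde{\mathbf{v}})))$; (b) $\mathcal{O}(\mathcal{P}(\tilde{\mathbf{v}}))=\mathcal{O}(\overline{\mathrm{conv}}(\mathcal{P}_\theta(\tilde{\mathbf{v}}))\cap\mathcal{P}_P)$; and for any $0<\underline{\mathbf{v}}\le\overline{\mathbf{v}}$ in $\mathbb{R}^n$, (c) $\bigcup_{\underline{\mathbf{v}}\le\tilde{\mathbf{v}}\le\overline{\mathbf{v}}}\overline{\mathrm{conv}}(\mathcal{P}_\theta(\tilde{\mathbf{v}}))$ is a convex set.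
   Context: Each line $(i,k)$ has admittance $y_{ik}=g_{ik}-jb_{ik}$, $g_{ik},b_{ik}\ge0$. For fixed voltage magnitudes $|V_i|=\tilde V_i$, the flows on line $(i,k)$ with $\theta_{ik}=\theta_i-\theta_k$ are $P_{ik}=\tilde V_i^2 g_{ik}+\tilde V_i\tilde V_k b_{ik}\sin\theta_{ik}-\tilde V_i\tilde V_k g_{ik}\cos\theta_{ik}$, $P_{ki}=\tilde V_k^2 g_{ik}-\tilde V_i\tilde V_k b_{ik}\sin\theta_{ik}-\tilde V_i\tilde V_k g_{ik}\cos\theta_{ik}$; $\mathcal{F}_{\theta_{ik}}(\tilde{\mathbf{v}})$ is the set of such $(P_{ik},P_{ki})$ for $\theta_{ik}\in[\underline{\theta}_{ik},\overline{\theta}_{ik}]$. $\mathbf{A}$ is the $n\times2|\mathcal{E}|$ matrix with $A(i,(k,l))=1$ if $i=k$ and $0$ otherwise (so $(\mathbf{A}\mathbf{f})_i=\sum_{k\sim i}P_{ik}$). $\mathcal{P}_\theta(\tilde{\mathbf{v}})=\mathbf{A}\prod_{(i,k)\in\mathcal{E}}\mathcal{F}_{\theta_{ik}}(\tilde{\mathbf{v}})$, $\mathcal{P}_P=\{\mathbf{p}:P_i\le\overline{P}_i\ \forall i\}$, $\mathcal{P}(\tilde{\mathbf{v}})=\mathcal{P}_\theta(\tilde{\mathbf{v}})\cap\mathcal{P}_P$. For a Hermitian $n\times n$ matrix $\mathbf{W}$, $W_{ik}$ is its $(i,k)$ entry and $\mathbf{W}_{ik}$ its $2\times2$ submatrix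 on rows/columns $i,k$. Let $\mathcal{H}_{ik}(\tilde{\mathbf{v}})$ be the set of Hermitian $\mathbf{W}$ with $\mathbf{W}_{ik}$ positive semidefinite, $W_{ii}=\tilde V_i^2$, $W_{kk}=\tilde V_k^2$, and $\tan(\underline{\theta}_{ik})\,\mathrm{Re}(W_{ik})\le\mathrm{Im}(W_{ik})\le\tan(\overline{\theta}_{ik})\,\mathrm{Re}(W_{ik})$. With $\mathbf{Y}_{ik}=\begin{bmatrix}y_{ik}&-y_{ik}\\-y_{ik}&y_{ik}\end{bmatrix}$, define $\overline{\mathrm{conv}}(\mathcal{F}_{\theta_{ik}}(\tilde{\mathbf{v}}))=\{\mathrm{Re}(\mathrm{diag}(\mathbf{W}_{ik}\mathbf{Y}_{ik}^H)):\mathbf{W}\in\mathcal{H}_{ik}(\tilde{\mathbf{v}})\}\subset\mathbb{R}^2$ (interpreted as a pair $(P_{ik},P_{ki})$), $\overline{\mathrm{conv}}(\mathcal{F}_\theta(\tilde{\mathbf{v}}))=\prod_{(i,k)}\overline{\mathrm{conv}}(\mathcal{F}_{\theta_{ik}}(\tilde{\mathbf{v}}))$ and $\overline{\mathrm{conv}}(\mathcal{P}_\theta(\tilde{\mathbf{v}}))=\mathbf{A}\,\overline{\mathrm{conv}}(\mathcal{F}_\theta(\tilde{\mathbf{v}}))$. For $\mathcal{A}\subseteq\mathbb{R}^m$, $\mathcal{O}(\mathcal{A})$ is the set of Pareto-optimal points (no $y\in\mathcal{A}$ with $y\le x$ componentwise, strict in some coordinate). *)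

From HB Require Import structures.
From mathcomp Require Import all_boot all_order all_algebra.
From mathcomp Require Import all_classical all_reals.
From mathcomp Require Import trigo.
From mathcomp Require Import complex.
Set Implicit Arguments. Unset Strict Implicit. Unset Printing Implicit Defensive.
Import Order.TTheory GRing.Theory Num.Theory.
Local Open Scope classical_set_scope.
Local Open Scope ring_scope.
Local Open Scope complex_scope.

Section PowerNetwork.
Variables (R : realType) (n : nat).

(* Network on buses 'I_n (= {1,...,n}); each line is stored once as an ordered
   pair (i,k), giving the orientation used for theta_ik = theta_i - theta_k. *)
Definition adj (E : seq ('I_n * 'I_n)) : rel 'I_n :=
  fun i k => ((i, k) \in E) || ((k, i) \in E).

Definition is_tree (E : seq ('I_n * 'I_n)) : Prop :=
  [/\ (0 < n)%N /\ uniq E,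
      (forall e, e \in E -> e.1 != e.2),
      (forall e, e \in E -> (e.2, e.1) \notin E),
      size E = n.-1
    & forall i j : 'I_n, connect (adj E) i j].

Definition line_flow (V : 'I_n -> R) (g b : 'I_n -> 'I_n -> R) (i k : 'I_n)
  (th : R) : R * R :=
  (V i ^+ 2 * g i k + V i * V k * b i k * sin th - V i * V k * g i k * cos th,
   V k ^+ 2 * g i k - V i * V k * b i k * sin th - V i * V k * g i k * cos th).

Definition F_theta (V : 'I_n -> R) (g b thlo thhi : 'I_n -> 'I_n -> R)
  (i k : 'I_n) : set (R * R) :=
  [set pq | exists th, thlo i k <= th <= thhi i k /\ pq = line_flow V g b i k th].

(* A f: (A f)_i = sum over lines incident to i of the flow leaving i. Columns of
   A are the directed pairs (i,k),(k,i) for each line (i,k), with A(i,(k,l)) = [i = k]. *)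
Definition A_apply (E : seq ('I_n * 'I_n)) (f : 'I_n * 'I_n -> R * R) : 'I_n -> R :=
  fun i => \sum_(e <- E) ((if e.1 == i then (f e).1 else 0) +
                          (if e.2 == i then (f e).2 else 0)).

Definition A_image (E : seq ('I_n * 'I_n)) (F : 'I_n -> 'I_n -> set (R * R)) :
  set ('I_n -> R) :=
  [set p | exists f : 'I_n * 'I_n -> R * R,
      (forall e, e \in E -> F e.1 e.2 (f e)) /\ p = A_apply E f].

Definition P_theta E V g b thlo thhi : set ('I_n -> R) :=
  A_image E (F_theta V g b thlo thhi).

Definition P_P (Pbar : 'I_n -> R) : set ('I_n -> R) :=
  [set p | forall i, p i <= Pbar i].

Definition hermitian m (W : 'M[R[i]]_m) : Prop :=
  forall a c, W a c = (W c a)^*.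

Definition conjT m p (M : 'M[R[i]]_(m, p)) : 'M[R[i]]_(p, m) := (map_mx conjc M)^T.

Definition psd m (W : 'M[R[i]]_m) : Prop :=
  hermitian W /\ forall x : 'cV[R[i]]_m, 0 <= complex.Re ((conjT x *m W *m x) 0 0).

Definition sub2 (i k : 'I_n) (W : 'M[R[i]]_n) : 'M[R[i]]_2 :=
  \matrix_(a < 2, c < 2)
     W (if a == 0 :> nat then i else k) (if c == 0 :> nat then i else k).

Definition H_edge (V : 'I_n -> R) (thlo thhi : 'I_n -> 'I_n -> R) (i k : 'I_n) :
  set 'M[R[i]]_n :=
  [set W | [/\ hermitian W, psd (sub2 i k W),
             W i i = (V i ^+ 2)%:C, W k k = (V k ^+ 2)%:C
           & tan (thlo i k) * complex.Re (W i k) <= complex.Im (W i k) <= tan (thhi i k) * complex.Re (W i k)]].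

Definition Y_edge (g b : 'I_n -> 'I_n -> R) (i k : 'I_n) : 'M[R[i]]_2 :=
  let y := (g i k) -i* (b i k) in
  \matrix_(a < 2, c < 2) (if a == c then y else - y).

(* closure of convex hull of F_{theta_ik}(v), defined via the SDP relaxation *)
Definition conv_F (V : 'I_n -> R) (g b thlo thhi : 'I_n -> 'I_n -> R)
  (i k : 'I_n) : set (R * R) :=
  [set pq | exists W, H_edge V thlo thhi i k W /\
     let D := sub2 i k W *m conjT (Y_edge g b i k) in
     pq = (complex.Re (D 0 0), complex.Re (D 1 1))].

Definition conv_P_theta E V g b thlo thhi : set ('I_n -> R) :=
  A_image E (conv_F V g b thlo thhi).

Definition pareto (A : set ('I_n -> R)) : set ('I_n -> R) :=
  [set x | A x /\ ~ (exists y, A y /\ (forall i, y i <= x i) /\ exists i, y i < x i)].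

Definition convex_set (S : set ('I_n -> R)) : Prop :=
  forall x y, S x -> S y -> forall t : R, 0 <= t <= 1 ->
    S (fun i => t * x i + (1 - t) * y i).

End PowerNetwork.

(* For fixed voltage magnitudes the relaxation of a line constrains only the
   off-diagonal entry w = W_ik: by the 2x2 positive semidefiniteness criterion,
   w ranges over the circular sector |w| <= V_i V_k with angle in
   [thlo, thhi], and the exact flows are the points of the bounding arc.  Both
   line flows are affine in w and, since g >= 0, nonincreasing in Re w.  Moving
   w horizontally onto the arc, to the angle asin (Im w / (V_i V_k)), which stays
   in [thlo, thhi] because thlo <= 0 <= thhi, therefore lowers both flows: every
   relaxed injection is dominated by an exact one, which gives (a), and (b)
   because the upper bounds P_P are downward closed.  For (c), the relaxed set
   is a linear image of matrices in the convex PSD cone subject to constraints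
   linear in W and in the squares V_i^2, so convex combinations of feasible
   matrices are feasible for the magnitudes sqrt (t V^2 + (1 - t) V'^2). *)

From Pilot Require Import Defs.
From mathcomp Require Import all_boot all_order all_algebra.
From mathcomp Require Import all_classical all_reals.
From mathcomp Require Import trigo.
From mathcomp Require Import complex.
From mathcomp Require Import ring lra.
Set Implicit Arguments. Unset Strict Implicit. Unset Printing Implicit Defensive.
Import Order.TTheory GRing.Theory Num.Theory.
Local Open Scope classical_set_scope.
Local Open Scope ring_scope.
Local Open Scope complex_scope.

Local Notation Re := complex.Re.
Local Notation Im := complex.Im.
Local Notation hermitian := Defs.hermitian.

Section ComplexCombination.
Variable R : rcfType.
Implicit Types (t s : R) (x y : R[i]).

Lemma Re_comb t s x y : Re (t%:C * x + s%:C * y) = t * Re x + s * Re y.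
Proof. by case: x => a b; case: y => c d /=; ring. Qed.

Lemma Im_comb t s x y : Im (t%:C * x + s%:C * y) = t * Im x + s * Im y.
Proof. by case: x => a b; case: y => c d /=; ring. Qed.

Lemma conjc_comb t s x y : (t%:C * x + s%:C * y)^*%C = t%:C * x^*%C + s%:C * y^*%C.
Proof. by case: x => a b; case: y => c d /=; congr Complex; ring. Qed.

End ComplexCombination.

Section Psd.
Variable R : realType.

Lemma quad2E (M : 'M[R[i]]_2) (x : 'cV[R[i]]_2) :
  (conjT x *m M *m x) 0 0 = (x 0 0)^*%C * M 0 0 * x 0 0 + (x 0 0)^*%C * M 0 1 * x 1 0
     + ((x 1 0)^*%C * M 1 0 * x 0 0 + (x 1 0)^*%C * M 1 1 * x 1 0).
Proof.
rewrite !mxE !big_ord_recr !big_ord0 /= !mxE !big_ord_recr !big_ord0 /= !mxE.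
have -> : widen_ord (leqnSn 1) ord_max = 0 :> 'I_2 by apply/val_inj.
have -> : (ord_max : 'I_2) = 1 by apply/val_inj.
ring.
Qed.

Lemma psd2P (M : 'M[R[i]]_2) (A B : R) : 0 < A -> 0 < B -> hermitian M ->
  M 0 0 = (A ^+ 2)%:C -> M 1 1 = (B ^+ 2)%:C ->
  psd M <-> Re (M 0 1) ^+ 2 + Im (M 0 1) ^+ 2 <= A ^+ 2 * B ^+ 2.
Proof.
move=> A0 B0 hM M00 M11; have M10 : M 1 0 = (M 0 1)^*%C by rewrite hM.
have B2 : 0 < B ^+ 2 by rewrite exprn_gt0.
have A2 : 0 < A ^+ 2 by rewrite exprn_gt0.
split=> [[_ /(_ (\col_j if j == 0 then (B ^+ 2)%:C else - (M 0 1)^*%C))] | le_w].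
  rewrite quad2E !mxE /= M00 M11 M10; case: (M 0 1) => p q /=; nra.
split=> // x; rewrite quad2E M00 M11 M10.
move: le_w; case: (M 0 1) => p q /= le_w.
case: (x 0 0) => a b; case: (x 1 0) => c d /=.
set Q := _ + _.
have -> : Q = ((A ^+ 2 * a + (p * c - q * d)) ^+ 2 + (A ^+ 2 * b + (p * d + q * c)) ^+ 2
    + (A ^+ 2 * B ^+ 2 - (p ^+ 2 + q ^+ 2)) * (c ^+ 2 + d ^+ 2)) / A ^+ 2.
  by rewrite /Q; field; rewrite gt_eqF.
apply: divr_ge0 (ltW A2); apply: addr_ge0; first by rewrite addr_ge0 ?sqr_ge0.
by rewrite mulr_ge0 ?subr_ge0 ?addr_ge0 ?sqr_ge0.
Qed.

Lemma hermitian_comb m (t s : R) (M N : 'M[R[i]]_m) : hermitian M -> hermitian N ->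
  hermitian (t%:C *: M + s%:C *: N).
Proof. by move=> hM hN a c; rewrite !mxE conjc_comb -hM -hN. Qed.

Lemma psd_comb m (t s : R) (M N : 'M[R[i]]_m) : 0 <= t -> 0 <= s -> psd M -> psd N ->
  psd (t%:C *: M + s%:C *: N).
Proof.
move=> t0 s0 [hM qM] [hN qN]; split; first exact: hermitian_comb.
have entry (a c : R[i]) (A B : 'M[R[i]]_1) :
  (a *: A + c *: B) 0 0 = a * A 0 0 + c * B 0 0 by rewrite !mxE.
move=> x; rewrite mulmxDr mulmxDl -!scalemxAr -!scalemxAl entry Re_comb.
by rewrite addr_ge0 ?mulr_ge0 ?qM ?qN.
Qed.

End Psd.

Section Trigonometry.
Variable R : realType.
Implicit Types x y l r : R.

Lemma ler_sin : {in `[- (pi / 2), pi / 2] &, {mono (@sin R) : x y / x <= y}}.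
Proof. by apply: le_mono_in => x y xI yI; rewrite ltr_sin. Qed.

Lemma ler_tan : {in `]- (pi / 2), pi / 2[ &, {mono (@tan R) : x y / x <= y}}.
Proof. by apply: le_mono_in => x y xI yI; rewrite ltr_tan. Qed.

Lemma tanMcos x : cos x != 0 -> tan x * cos x = sin x.
Proof. by move=> cx; rewrite /tan divfK. Qed.

Lemma sin_le_of_tan_le l r x y : - (pi / 2) < l <= 0 -> 0 < r ->
  x ^+ 2 + y ^+ 2 <= r ^+ 2 -> tan l * x <= y -> r * sin l <= y.
Proof.
move=> /andP[lgt l0] r0 disc cone.
have cl : 0 < cos l by rewrite cos_gt0_pihalf // lgt /=; lra.
have sl : sin l <= 0.
  by rewrite -sin0 ler_sin // in_itv /= ?ltW //=; lra.
have sc := cos2Dsin2 l.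
have cone' : sin l * x <= cos l * y.
  by rewrite -(tanMcos (lt0r_neq0 cl)) mulrAC [cos l * y]mulrC ler_pM2r.
have rs0 : r * sin l <= 0 by rewrite mulr_ge0_le0 // ltW.
have [y0|y0] := lerP 0 y; first exact: le_trans rs0 y0.
have cy0 : cos l * y < 0 by rewrite pmulr_rlt0.
have cy_sx : (cos l * y) ^+ 2 <= (sin l * x) ^+ 2.
  have : 0 <= (cos l * y - sin l * x) * (- (cos l * y) - sin l * x).
    by apply: mulr_ge0; lra.
  nra.
have sx_sr : (sin l * x) ^+ 2 <= sin l ^+ 2 * (r ^+ 2 - y ^+ 2).
  by rewrite exprMn ler_wpM2l ?sqr_ge0 //; lra.
have : y ^+ 2 <= (r * sin l) ^+ 2 by nra.
nra.
Qed.

End Trigonometry.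

Section Lines.
Variables (R : realType) (n : nat).
Implicit Types (V : 'I_n -> R) (g b lo hi : 'I_n -> 'I_n -> R) (i k : 'I_n).

Definition sdp_flow V g b i k (w : R[i]) : R * R :=
  (V i ^+ 2 * g i k - g i k * Re w + b i k * Im w,
   V k ^+ 2 * g i k - g i k * Re w - b i k * Im w).

Definition feasible_entry V lo hi i k (w : R[i]) : Prop :=
  Re w ^+ 2 + Im w ^+ 2 <= (V i * V k) ^+ 2 /\
  tan (lo i k) * Re w <= Im w <= tan (hi i k) * Re w.

Lemma sdp_flowE V g b i k (W : 'M[R[i]]_n) : hermitian W ->
  W i i = (V i ^+ 2)%:C -> W k k = (V k ^+ 2)%:C ->
  (Re ((sub2 i k W *m conjT (Y_edge g b i k)) 0 0),
   Re ((sub2 i k W *m conjT (Y_edge g b i k)) 1 1)) = sdp_flow V g b i k (W i k).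
Proof.
move=> hW Wii Wkk.
rewrite !mxE !big_ord_recr !big_ord0 /= !mxE /= Wii Wkk (hW k i).
by case: (W i k) => x y; rewrite /sdp_flow /=; congr pair; ring.
Qed.

Lemma sub2_hermitian i k (W : 'M[R[i]]_n) : hermitian W -> hermitian (sub2 i k W).
Proof. by move=> hW a c; rewrite !mxE hW. Qed.

Lemma psd_sub2P i k (W : 'M[R[i]]_n) (A B : R) : 0 < A -> 0 < B -> hermitian W ->
  W i i = (A ^+ 2)%:C -> W k k = (B ^+ 2)%:C ->
  psd (sub2 i k W) <-> Re (W i k) ^+ 2 + Im (W i k) ^+ 2 <= A ^+ 2 * B ^+ 2.
Proof.
move=> A0 B0 hW Wii Wkk.
by have := psd2P A0 B0 (sub2_hermitian i k hW); rewrite !mxE /=; apply.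
Qed.

Lemma conv_FE V g b lo hi i k : i != k -> 0 < V i -> 0 < V k ->
  conv_F V g b lo hi i k = sdp_flow V g b i k @` feasible_entry V lo hi i k.
Proof.
move=> ik Vi Vk.
apply/seteqP; split=> [pq [W [[hW psdW Wii Wkk cone] ->]] | _ [w [disc cone] <-]].
  exists (W i k); last by rewrite /= (sdp_flowE _ _ hW Wii Wkk).
  by split => //; rewrite exprMn -(psd_sub2P Vi Vk hW).
pose W : 'M[R[i]]_n := \matrix_(a, c) if a == c then (V a ^+ 2)%:C
  else if (a == i) && (c == k) then w else if (a == k) && (c == i) then w^*%C else 0.
have Wii : W i i = (V i ^+ 2)%:C by rewrite mxE eqxx.
have Wkk : W k k = (V k ^+ 2)%:C by rewrite mxE eqxx.
have Wik : W i k = w by rewrite mxE (negPf ik) !eqxx.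
have hW : hermitian W.
  move=> a c; rewrite !mxE [c == a]eq_sym [(c == i) && _]andbC [(c == k) && _]andbC.
  have [-> | _] := eqVneq a c; first by rewrite /= oppr0.
  case hA : ((a == i) && (c == k)); case hB : ((a == k) && (c == i));
    rewrite ?conjcK //= ?oppr0 //.
  by move: hA hB => /andP[/eqP-> _] /andP[/eqP ik' _]; rewrite ik' eqxx in ik.
exists W; split; last by rewrite /= (sdp_flowE _ _ hW Wii Wkk) Wik.
split; rewrite ?Wik //.
by rewrite (psd_sub2P Vi Vk hW) // Wik -exprMn.
Qed.

Definition polar_entry V i k (th : R) : R[i] :=
  (V i * V k * cos th) +i* (V i * V k * sin th).

Lemma line_flowE V g b i k th :
  line_flow V g b i k th = sdp_flow V g b i k (polar_entry V i k th).
Proof. by rewrite /line_flow /sdp_flow /=; congr pair; ring. Qed.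

Lemma polar_entry_feasible V lo hi i k th : 0 < V i -> 0 < V k ->
  - (pi / 2) < lo i k -> hi i k < pi / 2 -> lo i k <= th <= hi i k ->
  feasible_entry V lo hi i k (polar_entry V i k th).
Proof.
move=> Vi Vk lo_gt hi_lt /andP[lo_th th_hi].
have inI t : - (pi / 2) < t < pi / 2 -> t \in `]- (pi / 2), pi / 2[ by rewrite in_itv.
have thI : th \in `]- (pi / 2), pi / 2[ by apply: inI; apply/andP; split; lra.
have loI : lo i k \in `]- (pi / 2), pi / 2[ by apply: inI; apply/andP; split; lra.
have hiI : hi i k \in `]- (pi / 2), pi / 2[ by apply: inI; apply/andP; split; lra.
have rc : 0 < V i * V k * cos th by rewrite !mulr_gt0 // cos_gt0_pihalf.
rewrite /feasible_entry /polar_entry /=; split.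
  by rewrite !exprMn -mulrDr cos2Dsin2 mulr1.
have cth : cos th != 0 by rewrite lt0r_neq0 // cos_gt0_pihalf.
have -> : V i * V k * sin th = tan th * (V i * V k * cos th).
  by rewrite mulrCA tanMcos.
by rewrite !ler_pM2r // !ler_tan ?lo_th.
Qed.

Lemma feasible_entry_on_arc V lo hi i k w : 0 < V i -> 0 < V k ->
  - (pi / 2) < lo i k <= 0 -> 0 <= hi i k < pi / 2 ->
  feasible_entry V lo hi i k w ->
  exists2 th, lo i k <= th <= hi i k &
    Re w <= Re (polar_entry V i k th) /\ Im (polar_entry V i k th) = Im w.
Proof.
move=> Vi Vk lo_itv /andP[hi_ge hi_lt] [].
rewrite /polar_entry /=; set r := V i * V k.
case: w => x y /= disc /andP[lo_y y_hi].
have r0 : 0 < r by rewrite mulr_gt0.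
have y_r : `|y| <= r.
  rewrite -sqrtr_sqr -(ger0_norm (ltW r0)) -sqrtr_sqr ler_sqrt ?sqr_ge0 //.
  by have := sqr_ge0 x; lra.
have y_r1 : -1 <= y / r <= 1.
  by rewrite ler_pdivlMr // ler_pdivrMr // mulN1r mul1r -ler_norml.
have [asinI sin_asin] := asin_def y_r1.
have piI (t : R) : - (pi / 2) < t < pi / 2 -> t \in `[- (pi / 2), pi / 2].
  by rewrite in_itv => /andP[? ?] /=; rewrite !ltW.
have loI : lo i k \in `[- (pi / 2), pi / 2].
  by apply: piI; case/andP: lo_itv => -> /=; lra.
have hiI : hi i k \in `[- (pi / 2), pi / 2] by apply: piI; rewrite hi_lt andbT; lra.
exists (asin (y / r)).
  have asinI' : asin (y / r) \in `[- (pi / 2), pi / 2] by rewrite in_itv.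
  rewrite -(ler_sin loI asinI') -(ler_sin asinI' hiI) sin_asin.
  rewrite ler_pdivlMr // ler_pdivrMr // ![sin _ * r]mulrC.
  rewrite (sin_le_of_tan_le lo_itv r0 disc lo_y) /=.
  rewrite -lerN2 -mulrN -sinN; apply: (sin_le_of_tan_le (x := x)) => //.
  - by rewrite oppr_le0 hi_ge andbT ltrN2.
  - by rewrite sqrrN.
  - by rewrite tanN mulNr lerN2.
split; last by rewrite sin_asin mulrC divfK ?lt0r_neq0.
have rcos : r * cos (asin (y / r)) = Num.sqrt (r ^+ 2 - y ^+ 2).
  have z2 : (y / r) ^+ 2 <= 1 by nra.
  have rc0 : 0 <= r * cos (asin (y / r)) by rewrite cos_asin // mulr_ge0 ?sqrtr_ge0 ?ltW.
  rewrite -[LHS]ger0_norm // -sqrtr_sqr exprMn cos_asin // sqr_sqrtr ?subr_ge0 //.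
  by congr Num.sqrt; field; rewrite lt0r_neq0.
rewrite rcos; apply: le_trans (ler_norm x) _.
by rewrite -sqrtr_sqr ler_sqrt; have := sqr_ge0 x; lra.
Qed.

Lemma sdp_flow_le V g b i k w w' : 0 <= g i k ->
  Re w <= Re w' -> Im w' = Im w ->
  (sdp_flow V g b i k w').1 <= (sdp_flow V g b i k w).1 /\
  (sdp_flow V g b i k w').2 <= (sdp_flow V g b i k w).2.
Proof.
by move=> g0 le_w eq_w; rewrite /sdp_flow /= eq_w; have := ler_wpM2l g0 le_w; lra.
Qed.

Lemma F_theta_sub_conv_F V g b lo hi i k : i != k -> 0 < V i -> 0 < V k ->
  - (pi / 2) < lo i k -> hi i k < pi / 2 ->
  F_theta V g b lo hi i k `<=` conv_F V g b lo hi i k.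
Proof.
move=> ik Vi Vk lo_gt hi_lt _ [th [th_itv ->]]; rewrite conv_FE // line_flowE.
by exists (polar_entry V i k th) => //; exact: polar_entry_feasible.
Qed.

Lemma conv_F_dominated V g b lo hi i k pq : i != k -> 0 < V i -> 0 < V k ->
  0 <= g i k -> - (pi / 2) < lo i k <= 0 -> 0 <= hi i k < pi / 2 ->
  conv_F V g b lo hi i k pq ->
  exists2 pq', F_theta V g b lo hi i k pq' & pq'.1 <= pq.1 /\ pq'.2 <= pq.2.
Proof.
move=> ik Vi Vk g0 lo_itv hi_itv; rewrite conv_FE // => -[w feas <-].
have [th th_itv [Re_le Im_eq]] := feasible_entry_on_arc Vi Vk lo_itv hi_itv feas.
exists (line_flow V g b i k th); first by exists th.
by rewrite line_flowE; apply: sdp_flow_le.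
Qed.

Lemma sub2_comb i k (a c : R[i]) (W W' : 'M[R[i]]_n) :
  sub2 i k (a *: W + c *: W') = a *: sub2 i k W + c *: sub2 i k W'.
Proof. by apply/matrixP => ? ?; rewrite !mxE. Qed.

Lemma conv_F_comb V V' V'' g b lo hi i k pq pq' (t s : R) : 0 <= t -> 0 <= s ->
  V'' i ^+ 2 = t * V i ^+ 2 + s * V' i ^+ 2 ->
  V'' k ^+ 2 = t * V k ^+ 2 + s * V' k ^+ 2 ->
  conv_F V g b lo hi i k pq -> conv_F V' g b lo hi i k pq' ->
  conv_F V'' g b lo hi i k (t * pq.1 + s * pq'.1, t * pq.2 + s * pq'.2).
Proof.
move=> t0 s0 Vi Vk [W [[hW psdW Wii Wkk /andP[lo_W W_hi]] ->]].
move=> [W' [[hW' psdW' Wii' Wkk' /andP[lo_W' W_hi']] ->]].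
exists (t%:C *: W + s%:C *: W'); split; last first.
  by rewrite /= sub2_comb mulmxDl -!scalemxAl !mxE !Re_comb.
split; first exact: hermitian_comb.
- by rewrite sub2_comb; apply: psd_comb.
- by rewrite !mxE Wii Wii' Vi -!rmorphM -rmorphD.
- by rewrite !mxE Wkk Wkk' Vk -!rmorphM -rmorphD.
rewrite !mxE Re_comb Im_comb; apply/andP; split.
  by have := ler_wpM2l t0 lo_W; have := ler_wpM2l s0 lo_W'; lra.
by have := ler_wpM2l t0 W_hi; have := ler_wpM2l s0 W_hi'; lra.
Qed.

End Lines.

Local Close Scope complex_scope.

Section Pareto.
Variables (R : realType) (n : nat).
Implicit Types S T : set ('I_n -> R).

Definition dominates S T := forall t, T t -> exists2 s, S s & forall i, s i <= t i.

Lemma pareto_eq S T : S `<=` T -> dominates S T -> pareto S = pareto T.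
Proof.
move=> ST domST; apply/seteqP; split=> x [Sx x_min].
  split; first exact: ST.
  move=> [y [Ty [y_x [i yi]]]]; have [s Ss s_y] := domST y Ty.
  apply: x_min; exists s; split=> //; split=> [j|]; first exact: le_trans (s_y j) (y_x j).
  by exists i; exact: le_lt_trans (s_y i) yi.
have [s Ss s_x] := domST x Sx.
have -> : x = s.
  apply/funext => i; apply/eqP; rewrite eq_le s_x andbT leNgt; apply/negP => si.
  by apply: x_min; exists s; split; [exact: ST | split=> //; exists i].
split=> // -[y [Sy [y_s [i yi]]]]; apply: x_min; exists y; split; first exact: ST.
split=> [j|]; first exact: le_trans (y_s j) (s_x j).
by exists i; exact: lt_le_trans yi (s_x i).
Qed.

Lemma dominates_setI_P_P S T Pbar :
  dominates S T -> dominates (S `&` P_P Pbar) (T `&` P_P Pbar).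
Proof.
move=> domST t [Tt t_le]; have [s Ss s_t] := domST t Tt.
by exists s => //; split=> // i; exact: le_trans (s_t i) (t_le i).
Qed.

End Pareto.

Section Injection.
Variables (R : realType) (n : nat) (E : seq ('I_n * 'I_n)).
Implicit Types (f : 'I_n * 'I_n -> R * R) (F G : 'I_n -> 'I_n -> set (R * R)).

Lemma A_apply_le f f' :
  (forall e, e \in E -> (f' e).1 <= (f e).1 /\ (f' e).2 <= (f e).2) ->
  forall i, A_apply E f' i <= A_apply E f i.
Proof.
move=> f'_f i; rewrite /A_apply !big_seq; apply: ler_sum => e /f'_f[le1 le2].
by apply: lerD; case: ifP.
Qed.

Lemma A_apply_comb f f' (t s : R) i :
  A_apply E (fun e => (t * (f e).1 + s * (f' e).1, t * (f e).2 + s * (f' e).2)) i =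
  t * A_apply E f i + s * A_apply E f' i.
Proof.
rewrite /A_apply !mulr_sumr -big_split; apply: eq_bigr => e _ /=.
by case: ifP => _; case: ifP => _; ring.
Qed.

Lemma A_image_sub F G : (forall e, e \in E -> F e.1 e.2 `<=` G e.1 e.2) ->
  A_image E F `<=` A_image E G.
Proof. by move=> FG _ [f [Ff ->]]; exists f; split=> // e eE; apply/FG/Ff. Qed.

Lemma A_image_dominates F G :
  (forall e, e \in E -> forall pq, G e.1 e.2 pq ->
     exists2 pq', F e.1 e.2 pq' & pq'.1 <= pq.1 /\ pq'.2 <= pq.2) ->
  dominates (A_image E F) (A_image E G).
Proof.
move=> domFG _ [f [Gf ->]].
have /choice[f' f'_dom] : forall e, exists pq', e \in E ->
    F e.1 e.2 pq' /\ pq'.1 <= (f e).1 /\ pq'.2 <= (f e).2.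
  move=> e; have [eE|_] := boolP (e \in E); last by exists (f e).
  by have [pq' ? ?] := domFG e eE _ (Gf e eE); exists pq'.
exists (A_apply E f'); first by exists f'; split=> // e /f'_dom[].
by apply: A_apply_le => e /f'_dom[].
Qed.

End Injection.

Lemma sqrt_comb_sqr_itv (R : rcfType) (a c x y t : R) : 0 <= a ->
  a <= x <= c -> a <= y <= c -> 0 <= t <= 1 ->
  a <= Num.sqrt (t * x ^+ 2 + (1 - t) * y ^+ 2) <= c.
Proof.
move=> a0 /andP[ax xc] /andP[ay yc] /andP[t0 t1].
have c0 : 0 <= c by lra.
have s0 : 0 <= t * x ^+ 2 + (1 - t) * y ^+ 2 by nra.
rewrite -[a]ger0_norm // -[c]ger0_norm // -!sqrtr_sqr !ler_sqrt ?sqr_ge0 //.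
have t1' : 0 <= 1 - t by rewrite subr_ge0.
have ax2 : a ^+ 2 <= x ^+ 2 by nra.
have ay2 : a ^+ 2 <= y ^+ 2 by nra.
have xc2 : x ^+ 2 <= c ^+ 2 by nra.
have yc2 : y ^+ 2 <= c ^+ 2 by nra.
apply/andP; split.
  by have := ler_wpM2l t0 ax2; have := ler_wpM2l t1' ay2; lra.
by have := ler_wpM2l t0 xc2; have := ler_wpM2l t1' yc2; lra.
Qed.

Theorem lemma4 (R : realType) (n : nat) (E : seq ('I_n * 'I_n))
  (g b thlo thhi : 'I_n -> 'I_n -> R) (Pbar : 'I_n -> R) :
  is_tree E ->
  (forall e, e \in E ->
     [/\ 0 <= g e.1 e.2 /\ 0 <= b e.1 e.2,
         thlo e.1 e.2 <= 0, 0 <= thhi e.1 e.2,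
         - (pi / 2) < thlo e.1 e.2 < pi / 2
       & - (pi / 2) < thhi e.1 e.2 < pi / 2]) ->
  (forall V : 'I_n -> R, (forall i, 0 < V i) ->
     pareto (P_theta E V g b thlo thhi) =
       pareto (conv_P_theta E V g b thlo thhi) /\
     pareto (P_theta E V g b thlo thhi `&` P_P Pbar) =
       pareto (conv_P_theta E V g b thlo thhi `&` P_P Pbar)) /\
  (forall vlo vhi : 'I_n -> R, (forall i, 0 < vlo i /\ vlo i <= vhi i) ->
     convex_set [set p | exists V : 'I_n -> R,
                   (forall i, vlo i <= V i <= vhi i) /\
                   conv_P_theta E V g b thlo thhi p]).
Proof.
move=> [_ loopless _ _ _] lineE; split=> [V V0 | vlo vhi v_itv].
  have sub : P_theta E V g b thlo thhi `<=` conv_P_theta E V g b thlo thhi.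
    apply: A_image_sub => e /[dup] eE /lineE[_ _ _ /andP[lo_gt _] /andP[_ hi_lt]].
    exact: F_theta_sub_conv_F (loopless e eE) (V0 _) (V0 _) lo_gt hi_lt.
  have dom : dominates (P_theta E V g b thlo thhi) (conv_P_theta E V g b thlo thhi).
    apply: A_image_dominates => e /[dup] eE.
    move=> /lineE[[g0 _] lo0 hi0 /andP[lo_gt _] /andP[_ hi_lt]] pq.
    by apply: conv_F_dominated; rewrite ?loopless ?V0 ?lo_gt ?lo0 ?hi0 ?hi_lt.
  split; apply: pareto_eq => //; last exact: dominates_setI_P_P.
  exact: setSI.
move=> _ _ [V [V_itv [f [Hf ->]]]] [V' [V'_itv [f' [Hf' ->]]]] t t01.
have [t0 t1] : 0 <= t /\ 0 <= 1 - t by rewrite subr_ge0; apply/andP.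
pose V'' i := Num.sqrt (t * V i ^+ 2 + (1 - t) * V' i ^+ 2).
have V''2 i : V'' i ^+ 2 = t * V i ^+ 2 + (1 - t) * V' i ^+ 2.
  by rewrite sqr_sqrtr // addr_ge0 // mulr_ge0 // sqr_ge0.
exists V''; split.
  move=> i; have [vlo0 _] := v_itv i.
  exact: sqrt_comb_sqr_itv (ltW vlo0) (V_itv i) (V'_itv i) t01.
exists (fun e => (t * (f e).1 + (1 - t) * (f' e).1, t * (f e).2 + (1 - t) * (f' e).2)).
split; last by apply/funext => i; rewrite A_apply_comb.
by move=> e eE; apply: conv_F_comb (Hf e eE) (Hf' e eE).
Qed.
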